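(* Let $n\ge5$ and let $f(x)=x^n+a_2x^{n-2}+a_3x^{n-3}+\dots+a_{n-1}x+a_n$ be a polynomial (with zero coefficient of $x^{n-1}$) all of whose roots are real. Then $$\operatorname{spn}(f)\ge\Big(\frac{432}{n^3}\big(4(2-n)a_2^3-9na_3^2+8na_2a_4\big)\Big)^{1/6}.$$
   Context: If $x_1,\dots,x_n$ are the roots of $f$, the span of $f$ is $\operatorname{spn}(f)=\max_{i,j}|x_i-x_j|$. *)

From HB Require Import structures.
From mathcomp Require Import all_boot all_order all_algebra.
From mathcomp Require Import reals exp.
Set Implicit Arguments. Unset Strict Implicit. Unset Printing Implicit Defensive.
Import Order.TTheory GRing.Theory Num.Theory.
Local Open Scope ring_scope.

(* Span of a polynomial given (with multiplicity) by its list of roots rs: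
   spn = max_{i,j} |x_i - x_j|  (0 for the empty list). *)
Definition spn_roots (R : realDomainType) (rs : seq R) : R :=
  \big[Num.max/0]_(x <- rs) \big[Num.max/0]_(y <- rs) `|x - y|.

(* Write p_k for the power sums of the roots.  The vanishing of a_1 means
   p_1 = 0, and Newton's identities then give a_2 = -p_2/2, a_3 = -p_3/3 and
   a_4 = (p_2^2 - 2 p_4)/8, so the quantity under the root is
   432 (n p_2 p_4 - n p_3^2 - p_2^3) / n^3.  Let c be the midpoint of the
   roots and d = spn/2, so that |x - c| <= d for every root x; hence
   sum (x - c)^4 <= d^2 sum (x - c)^2, i.e. T <= d^2 S with S = p_2 + n c^2
   and T = p_4 - 4 c p_3 + 6 c^2 p_2 + n c^4.  The identity
     p_2 (n T - S^2) = n p_2 p_4 - n p_3^2 - p_2^3 + n (p_3 - 2 c p_2)^2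
   together with AM-GM in the form S^2 (K - S) <= 4 K^3 / 27 for K = n d^2
   bounds n p_2 p_4 - n p_3^2 - p_2^3 by 4 n^3 d^6 / 27 = n^3 spn^6 / 432. *)

From HB Require Import structures.
From mathcomp Require Import all_boot all_order all_algebra.
From mathcomp Require Import reals exp.
From mathcomp Require Import ring lra.
Set Implicit Arguments. Unset Strict Implicit. Unset Printing Implicit Defensive.
Import Order.TTheory GRing.Theory Num.Theory.

Local Open Scope ring_scope.

Section ElementarySymmetric.
Variable R : comNzRingType.
Implicit Types (s : seq R) (x : R).

Fixpoint esym_seq s k : R :=
  match s, k with
  | _, 0%N => 1
  | [::], _.+1 => 0
  | x :: s', k'.+1 => esym_seq s' k + x * esym_seq s' k'
  end.

Lemma esym_seq0 s : esym_seq s 0 = 1. Proof. by case: s. Qed.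

Lemma esym_seq_gt s k : (size s < k)%N -> esym_seq s k = 0.
Proof.
elim: s k => [|x s IHs] [|k] //= ltsk.
by rewrite !IHs ?mulr0 ?addr0 // ltnW.
Qed.

Lemma coef_prod_XsubC_esym s k : (k <= size s)%N ->
  (\prod_(x <- s) ('X - x%:P))`_(size s - k) = (-1) ^+ k * esym_seq s k.
Proof.
elim: s k => [|x s IHs] k.
  by rewrite leqn0 => /eqP ->; rewrite big_nil coefC expr0 mul1r.
rewrite big_cons mulrBl coefB coefXM coefCM.
case: k => [|k] /= lek.
  rewrite subn0 -[X in _`_X]subn0 IHs // esym_seq0.
  by rewrite nth_default ?size_prod_XsubC // mulr0 subr0.
rewrite subSS; have [ltks|] := ltnP k (size s).
  have -> : (size s - k == 0)%N = false by rewrite subn_eq0 leqNgt ltks.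
  rewrite -subnS IHs // IHs 1?ltnW // exprS; ring.
move=> lesk; have eqks : k = size s by apply/eqP; rewrite eqn_leq lesk -ltnS lek.
rewrite eqks subnn (esym_seq_gt (ltnSn (size s))) /= add0r.
have := IHs (size s) (leqnn _); rewrite subnn => ->.
rewrite exprS; ring.
Qed.

End ElementarySymmetric.

Section PowerSums.
Variable R : numFieldType.
Implicit Types (s : seq R) (x c : R).

Definition psum k s : R := \sum_(x <- s) x ^+ k.

Lemma psum_cons k x s : psum k (x :: s) = x ^+ k + psum k s.
Proof. exact: big_cons. Qed.

Lemma psum0 s : psum 0 s = (size s)%:R.
Proof.
elim: s => [|x s IHs]; first by rewrite /psum big_nil.
by rewrite psum_cons IHs expr0 /= -natr1 addrC.
Qed.

Lemma esym_seq1 s : esym_seq s 1 = psum 1 s.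
Proof.
elim: s => [|x s IHs]; first by rewrite /psum big_nil.
by rewrite /= IHs esym_seq0 psum_cons mulr1 addrC.
Qed.

Lemma esym_seq2 s : esym_seq s 2 = (psum 1 s ^+ 2 - psum 2 s) / 2.
Proof.
elim: s => [|x s IHs]; first by rewrite /psum !big_nil /=; field.
by rewrite [LHS]/= IHs esym_seq1 !psum_cons; field.
Qed.

Lemma esym_seq3 s :
  esym_seq s 3 = (psum 1 s ^+ 3 - 3 * psum 1 s * psum 2 s + 2 * psum 3 s) / 6.
Proof.
elim: s => [|x s IHs]; first by rewrite /psum !big_nil /=; field.
by rewrite [LHS]/= IHs esym_seq2 !psum_cons; field.
Qed.

Lemma esym_seq4 s :
  esym_seq s 4 = (psum 1 s ^+ 4 - 6 * psum 1 s ^+ 2 * psum 2 s + 3 * psum 2 s ^+ 2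
                  + 8 * psum 1 s * psum 3 s - 6 * psum 4 s) / 24.
Proof.
elim: s => [|x s IHs]; first by rewrite /psum !big_nil /=; field.
by rewrite [LHS]/= IHs esym_seq3 !psum_cons; field.
Qed.

Lemma sum_sqr_shift c s :
  \sum_(x <- s) (x - c) ^+ 2 = psum 2 s - 2 * c * psum 1 s + c ^+ 2 * psum 0 s.
Proof.
elim: s => [|x s IHs]; first by rewrite /psum !big_nil; ring.
by rewrite big_cons IHs !psum_cons; ring.
Qed.

Lemma sum_pow4_shift c s :
  \sum_(x <- s) (x - c) ^+ 4 = psum 4 s - 4 * c * psum 3 s + 6 * c ^+ 2 * psum 2 s
                               - 4 * c ^+ 3 * psum 1 s + c ^+ 4 * psum 0 s.
Proof.
elim: s => [|x s IHs]; first by rewrite /psum !big_nil; ring.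
by rewrite big_cons IHs !psum_cons; ring.
Qed.

Lemma coef_prod_XsubC_centered s : psum 1 s = 0 -> (4 <= size s)%N ->
  let f := \prod_(x <- s) ('X - x%:P) in
  [/\ f`_(size s - 2) = - psum 2 s / 2, f`_(size s - 3) = - psum 3 s / 3
     & f`_(size s - 4) = (psum 2 s ^+ 2 - 2 * psum 4 s) / 8].
Proof.
move=> p1_eq0 size_ge4 f.
have coefE k : (k <= 4)%N -> f`_(size s - k) = (-1) ^+ k * esym_seq s k.
  by move=> le_k4; rewrite coef_prod_XsubC_esym // (leq_trans le_k4).
rewrite !coefE // esym_seq2 esym_seq3 esym_seq4 p1_eq0.
by split; field.
Qed.

End PowerSums.

Section RealBounds.
Variable R : realFieldType.

Lemma sum_pow4_le_sqr_sum_sqr (c d : R) (s : seq R) :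
  {in s, forall x, `|x - c| <= d} ->
  \sum_(x <- s) (x - c) ^+ 4 <= d ^+ 2 * \sum_(x <- s) (x - c) ^+ 2.
Proof.
move=> near_c; rewrite mulr_sumr big_seq_cond [leRHS]big_seq_cond.
apply: ler_sum => x /andP[/near_c]; rewrite ler_norml => /andP[lb ub] _.
have le_sqr : (x - c) ^+ 2 <= d ^+ 2 by nra.
by rewrite (exprM _ 2 2) expr2 ler_wpM2r ?sqr_ge0.
Qed.

(* AM-GM for S/2, S/2, K - S, after replacing the factor t by S. *)
Lemma mul_sub_sqr_le_cube (t S K : R) : 0 <= t <= S -> 0 <= K ->
  t * (K * S - S ^+ 2) <= 4 * K ^+ 3 / 27.
Proof.
move=> /andP[t_ge0 le_tS] K_ge0.
have S_ge0 : 0 <= S by apply: le_trans le_tS.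
have -> : K * S - S ^+ 2 = S * (K - S) by ring.
have [le_SK|lt_KS] := leP S K.
  have amgm : S * (S * (K - S)) <= 4 * K ^+ 3 / 27.
    rewrite -subr_ge0.
    have -> : 4 * K ^+ 3 / 27 - S * (S * (K - S))
              = (3 * S - 2 * K) ^+ 2 * (3 * S + K) / 27 by field.
    by rewrite divr_ge0 // mulr_ge0 ?sqr_ge0 //; lra.
  by apply: le_trans amgm; rewrite ler_wpM2r ?mulr_ge0 ?subr_ge0.
apply: (@le_trans _ _ 0); last by rewrite divr_ge0 ?mulr_ge0 ?exprn_ge0.
by rewrite mulr_ge0_le0 // mulr_ge0_le0 //; lra.
Qed.

Lemma moment_invariant_le (n p2 p3 p4 c d : R) : 0 < n -> 0 <= p2 ->
  p4 - 4 * c * p3 + 6 * c ^+ 2 * p2 + n * c ^+ 4 <= d ^+ 2 * (p2 + n * c ^+ 2) ->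
  n * p2 * p4 - n * p3 ^+ 2 - p2 ^+ 3 <= 4 * (n * d ^+ 2) ^+ 3 / 27.
Proof.
move=> n_gt0 p2_ge0.
set S := p2 + n * c ^+ 2; set T := p4 - _ + _ + _ => le_TS.
have S_ge_p2 : p2 <= S by rewrite lerDl mulr_ge0 ?sqr_ge0 ?(ltW n_gt0).
have gap : p2 * (n * T - S ^+ 2) - (n * p2 * p4 - n * p3 ^+ 2 - p2 ^+ 3)
           = n * (p3 - 2 * c * p2) ^+ 2 by rewrite /S /T; ring.
apply: (@le_trans _ _ (p2 * (n * T - S ^+ 2))).
  by rewrite -subr_ge0 gap mulr_ge0 ?sqr_ge0 ?(ltW n_gt0).
apply: (@le_trans _ _ (p2 * (n * d ^+ 2 * S - S ^+ 2))).
  by rewrite ler_wpM2l // lerD2r -mulrA ler_wpM2l ?(ltW n_gt0).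
by apply: mul_sub_sqr_le_cube; rewrite ?p2_ge0 // mulr_ge0 ?sqr_ge0 ?(ltW n_gt0).
Qed.

End RealBounds.

Lemma seq_has_min_max d (T : orderType d) (s : seq T) : s != [::] ->
  exists lo hi, [/\ lo \in s, hi \in s & {in s, forall x, (lo <= x <= hi)%O}].
Proof.
elim: s => [//|x [|y s] IHs] _.
  by exists x, x; split; rewrite ?mem_head // => z; rewrite inE => /eqP ->; rewrite lexx.
have [lo [hi [lo_in hi_in lo_hi]]] := IHs isT.
exists (Order.min x lo), (Order.max x hi); split.
- by rewrite /Order.min; case: ifP => _; rewrite inE ?eqxx // lo_in orbT.
- by rewrite /Order.max; case: ifP => _; rewrite inE ?eqxx // hi_in orbT.
move=> z; rewrite inE => /predU1P[->|z_in]; first by rewrite ge_min le_max lexx.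
by have /andP[lo_z z_hi] := lo_hi z z_in; rewrite ge_min le_max lo_z z_hi !orbT.
Qed.

Section Span.
Variable R : realDomainType.
Implicit Types s : seq R.

Lemma spn_roots_ge0 s : 0 <= spn_roots s.
Proof. exact: bigmax_ge_id. Qed.

Lemma dist_le_spn_roots s x y : x \in s -> y \in s -> `|x - y| <= spn_roots s.
Proof.
move=> x_in y_in; apply: bigmax_sup_seq x_in _ _ => //.
exact: le_bigmax_seq y_in _.
Qed.

End Span.

Lemma moment_invariant_le_spn (R : realFieldType) (s : seq R) : psum 1 s = 0 ->
  432 * ((size s)%:R * psum 2 s * psum 4 s - (size s)%:R * psum 3 s ^+ 2
         - psum 2 s ^+ 3) <= (size s)%:R ^+ 3 * spn_roots s ^+ 6.
Proof.
move=> p1_eq0; have [->|s_neq0] := eqVneq s [::].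
  by rewrite /psum !big_nil /= !expr0n /= !mulr0n !mul0r !subr0 mulr0.
set n : R := (size s)%:R.
have n_gt0 : 0 < n by rewrite ltr0n lt0n size_eq0.
have [lo [hi [lo_in hi_in lo_hi]]] := seq_has_min_max s_neq0.
set D := spn_roots s; set c := (lo + hi) / 2; set d := D / 2.
have near_c : {in s, forall x, `|x - c| <= d}.
  move=> x x_in; have /andP[lo_x x_hi] := lo_hi x x_in.
  have := dist_le_spn_roots hi_in lo_in; rewrite ler_norml -/D => /andP[_ le_hiD].
  by rewrite ler_norml /c /d; apply/andP; split; lra.
have := sum_pow4_le_sqr_sum_sqr near_c.
rewrite sum_pow4_shift sum_sqr_shift p1_eq0 psum0 -/n => le_moments.
have p2_ge0 : 0 <= psum 2 s by apply: sumr_ge0 => x _; exact: sqr_ge0.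
have le_TS : psum 4 s - 4 * c * psum 3 s + 6 * c ^+ 2 * psum 2 s + n * c ^+ 4
             <= d ^+ 2 * (psum 2 s + n * c ^+ 2).
  by move: le_moments; congr (_ <= _); ring.
have := moment_invariant_le n_gt0 p2_ge0 le_TS; rewrite /d; lra.
Qed.

Lemma powR_invn_le (R : realType) (x y : R) (k : nat) : (0 < k)%N ->
  0 <= x -> 0 <= y -> x <= y ^+ k -> powR x k%:R^-1 <= y.
Proof.
move=> k_gt0 x_ge0 y_ge0 le_xy.
rewrite -[leRHS](_ : powR (y ^+ k) k%:R^-1 = y); last first.
  by rewrite -powR_mulrn // -powRrM mulfV ?powRr1 ?pnatr_eq0 -?lt0n.
by rewrite ge0_ler_powR ?invr_ge0 ?ler0n ?nnegrE ?exprn_ge0.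
Qed.

Theorem theorem4p2 (R : realType) (n : nat) (f : {poly R}) (rs : seq R) :
  (5 <= n)%N ->
  size rs = n ->
  f = \prod_(x <- rs) ('X - x%:P) ->
  f`_(n.-1) = 0 ->
  let a2 := f`_(n - 2) in
  let a3 := f`_(n - 3) in
  let a4 := f`_(n - 4) in
  let E := (432 / (n%:R ^+ 3)) *
           (4 * (2 - n%:R) * a2 ^+ 3 - 9 * n%:R * a3 ^+ 2
            + 8 * n%:R * a2 * a4) in
  0 <= E ->
  powR E (6%:R^-1) <= spn_roots rs.
Proof.
move=> n_ge5 size_rs f_eq coef_n1 a2 a3 a4 E E_ge0.
have n_gt0 : 0 < n%:R :> R by rewrite ltr0n (leq_trans _ n_ge5).
have p1_eq0 : psum 1 rs = 0.
  apply: oppr_inj; rewrite oppr0 -coef_n1 f_eq -size_rs coefPn_prod_XsubC.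
    by congr (- _); apply: eq_bigr => x _; rewrite expr1.
  by rewrite size_rs -lt0n (leq_trans _ n_ge5).
have size_ge4 : (4 <= size rs)%N by rewrite size_rs ltnW.
have [coef2 coef3 coef4] := coef_prod_XsubC_centered p1_eq0 size_ge4.
have E_le : E <= spn_roots rs ^+ 6.
  rewrite /E /a2 /a3 /a4 f_eq -size_rs coef2 coef3 coef4.
  rewrite mulrAC ler_pdivrMr; last by rewrite exprn_gt0 ?size_rs.
  have := moment_invariant_le_spn p1_eq0; lra.
by apply: powR_invn_le; rewrite ?spn_roots_ge0.
Qed.
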